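(* Let $\mathcal G=(I,O,\lambda)$ be a synchronous game and let $t\in\{loc,q,qa,qc,vect\}$. Then $p(a,b|v,w)$ is a perfect t-strategy for $\mathcal G$ if and only if $p(a,b|v,w)$ is a perfect t-strategy for $\mathcal G_s$.
   Context: A synchronous game $\mathcal G=(I,O,\lambda)$ consists of finite sets $I,O$ and $\lambda:I\times I\times O\times O\to\{0,1\}$ with $\lambda(v,v,a,b)=1$ if $a=b$ and $0$ if $a\ne b$. $\mathcal G_s=(I,O,\lambda_s)$ where $\lambda_s(v,w,a,b)=\lambda(v,w,a,b)\lambda(w,v,b,a)$. A strategy is a conditional probability density $p(a,b|v,w)$; it is perfect for a game with rule $\lambda$ if $\lambda(v,w,a,b)=0\Rightarrow p(a,b|v,w)=0$. The classes: loc = densities $p(a,b|v,w)=P(f_v=a,g_w=b)$ for random variables $f_v,g_w$ on a common probability space; q = densities $\langle(E_{v,a}\otimes F_{w,b})\psi,\psi\rangle$ with finite-dimensional Hilbert spaces, a unit vector $\psi$, and projection-valued measures $\{E_{v,a}\}_a$, $\{F_{w,b}\}_b$ (orthogonal projections summing to $I$); qa = closure of the set of q-densities; qc = densities $\langle E_{v,a}F_{w,b}\psi,\psi\rangle$ on a single Hilbert space with projection-valued measures satisfying $E_{v,a}F_{w,b}=F_{w,b}E_{v,a}$; vect = densities $\langle h_{v,a},k_{w,b}\rangle$ where for each $v$ the $h_{v,a}$ ($a\in O$) are mutually orthogonal, likewise the $k_{v,b}$, there is a unit vector $\eta$ with $\sum_ah_{v,a}=\eta=\sum_bk_{w,b}$,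 and all $\langle h_{v,a},k_{w,b}\rangle\ge0$. *)

From HB Require Import structures.
From mathcomp Require Import all_boot all_order all_algebra.
From mathcomp Require Import all_classical all_reals all_analysis.
From mathcomp Require Import complex mxtens.

Set Implicit Arguments.
Unset Strict Implicit.
Unset Printing Implicit Defensive.

Import Order.TTheory GRing.Theory Num.Theory.
Local Open Scope ring_scope.
Local Open Scope classical_set_scope.

Definition rule (I O : finType) := I -> I -> O -> O -> bool.

Definition synchronous (I O : finType) (lam : rule I O) : Prop :=
  forall (v : I) (a b : O), lam v v a b = (a == b).

Definition sym_rule (I O : finType) (lam : rule I O) : rule I O :=
  fun v w a b => lam v w a b && lam w v b a.

Section Strategies.
Variable R : realType.
Variables I O : finType.

Definition density := I -> I -> O -> O -> R.

Definition cond_density (p : density) : Prop :=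
  (forall v w a b, 0 <= p v w a b) /\
  (forall v w, \sum_(a : O) \sum_(b : O) p v w a b = 1).

Definition perfect_for (lam : rule I O) (p : density) : Prop :=
  forall v w a b, lam v w a b = false -> p v w a b = 0.

Definition loc_density (p : density) : Prop :=
  exists (d : measure_display) (Omega : measurableType d)
         (P : probability Omega R) (f g : I -> Omega -> O),
    (forall v a, measurable [set om | f v om = a]) /\
    (forall w b, measurable [set om | g w om = b]) /\
    (forall v w a b,
        (p v w a b)%:E = P [set om | f v om = a /\ g w om = b]).

Local Notation C := R[i].

(* Finite-dimensional case: Hilbert space C^n, operators are n x n complex
   matrices; adjoint = conjugate transpose. *)
Definition adjmx (m n : nat) (A : 'M[C]_(m, n)) : 'M[C]_(n, m) :=
  map_mx (fun z => z^*) A^T.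

Definition is_projmx (n : nat) (E : 'M[C]_n) : Prop :=
  E *m E = E /\ adjmx E = E.

Definition is_PVMmx (n : nat) (E : O -> 'M[C]_n) : Prop :=
  (forall a, is_projmx (E a)) /\ \sum_(a : O) E a = 1%:M.

(* q: p(a,b|v,w) = < (E_{v,a} (x) F_{w,b}) psi, psi > on C^n (x) C^m. *)
Definition q_density (p : density) : Prop :=
  exists (n m : nat) (E : I -> O -> 'M[C]_n) (F : I -> O -> 'M[C]_m)
         (psi : 'cV[C]_(n * m)),
    (forall v, is_PVMmx (E v)) /\ (forall w, is_PVMmx (F w)) /\
    (adjmx psi *m psi) 0 0 = 1 /\
    (forall v w a b,
       ((p v w a b)%:C)%C = (adjmx psi *m ((E v a *t F w b) *m psi)) 0 0).

Definition qa_density (p : density) : Prop :=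
  forall eps : R, 0 < eps ->
    exists p' : density, q_density p' /\
      forall v w a b, `|p v w a b - p' v w a b| < eps.

End Strategies.

Record hilbert (R : realType) := Hilbert {
  hspace :> lmodType R[i];
  hip : hspace -> hspace -> R[i];
  hip_linear : forall (c : R[i]) (x y z : hspace),
      hip (c *: x + y) z = c * hip x z + hip y z;
  hip_conj : forall x y : hspace, hip y x = (hip x y)^*;
  hip_ge0 : forall x : hspace, 0 <= hip x x;
  hip_def : forall x : hspace, hip x x = 0 -> x = 0;
  hip_complete : forall u : nat -> hspace,
      (forall eps : R, 0 < eps -> exists N : nat, forall m n : nat,
          (N <= m)%N -> (N <= n)%N -> complex.Re (hip (u m - u n) (u m - u n)) < eps) ->
      exists x : hspace, forall eps : R, 0 < eps -> exists N : nat,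
          forall n : nat, (N <= n)%N -> complex.Re (hip (u n - x) (u n - x)) < eps
}.

Section Commuting.
Variable R : realType.
Variables I O : finType.

Definition is_proj (H : hilbert R) (E : H -> H) : Prop :=
  linear E /\ (forall x, E (E x) = E x) /\
  (forall x y, hip (E x) y = hip x (E y)).

Definition is_PVM (H : hilbert R) (E : O -> H -> H) : Prop :=
  (forall a, is_proj (E a)) /\ (forall x, \sum_(a : O) E a x = x).

Definition qc_density (p : density R I O) : Prop :=
  exists (H : hilbert R) (E F : I -> O -> H -> H) (psi : H),
    (forall v, is_PVM (E v)) /\ (forall w, is_PVM (F w)) /\
    (forall v w a b x, E v a (F w b x) = F w b (E v a x)) /\
    hip psi psi = 1 /\
    (forall v w a b, ((p v w a b)%:C)%C = hip (E v a (F w b psi)) psi).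

Definition vect_density (p : density R I O) : Prop :=
  exists (H : hilbert R) (h k : I -> O -> H) (eta : H),
    (forall v a a', a != a' -> hip (h v a) (h v a') = 0) /\
    (forall w b b', b != b' -> hip (k w b) (k w b') = 0) /\
    hip eta eta = 1 /\
    (forall v, \sum_(a : O) h v a = eta) /\
    (forall w, \sum_(b : O) k w b = eta) /\
    (forall v w a b, 0 <= hip (h v a) (k w b)) /\
    (forall v w a b, ((p v w a b)%:C)%C = hip (h v a) (k w b)).

End Commuting.

Inductive corr_class := Loc | Q | QA | QC | Vect.

Definition in_class (R : realType) (I O : finType) (t : corr_class)
  (p : density R I O) : Prop :=
  match t with
  | Loc => loc_density p
  | Q => q_density p
  | QA => qa_density p
  | QC => qc_density p
  | Vect => vect_density p
  end.

Definition perfect_strategy (R : realType) (I O : finType) (t : corr_class)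
  (lam : rule I O) (p : density R I O) : Prop :=
  cond_density p /\ in_class t p /\ perfect_for lam p.

From mathcomp Require Import all_boot all_order all_algebra.
From mathcomp Require Import all_classical all_reals all_analysis.
From mathcomp Require Import complex mxtens ring lra.

Set Implicit Arguments.
Unset Strict Implicit.
Unset Printing Implicit Defensive.

Import Order.TTheory GRing.Theory Num.Theory.
Local Open Scope ring_scope.

(* A perfect strategy for a synchronous game is a synchronous density:
   p(a,b|v,v) = 0 for a <> b.  Since lambda_s only differs from lambda by also
   forbidding (w,v,b,a) whenever (v,w,a,b) is forbidden, it suffices that
   synchronous t-densities are symmetric, p(a,b|v,w) = p(b,a|w,v).
   In a vector model p(a,b|v,w) = <h_{v,a}, k_{w,b}> (vect directly; qc with
   h = E psi, k = F psi; q on the tensor product), the squared distance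
   |h_{v,a} - k_{v,a}|^2 is the diagonal mismatch
   M(v,a) = sum_{b <> a} p(a,b|v,v) + p(b,a|v,v), and Cauchy-Schwarz gives
   (p(a,b|v,w) - p(b,a|w,v))^2 <= 2 (M(v,a) + M(w,b)).  This bound is a closed
   condition, so it passes to qa, and it forces symmetry when M vanishes.
   For loc, f_u = g_u almost surely, so the events {f_v = a, g_w = b} and
   {f_w = b, g_v = a} differ by a null set. *)

Section RealFacts.
Variable R : realType.

Lemma le0_of_le_scaled (x c : R) : (forall e, 0 < e -> x <= e * c) -> x <= 0.
Proof.
move=> small; apply/ler_addgt0Pr => z z0; rewrite add0r.
have c1 : 0 < `|c| + 1 by rewrite ltr_wpDl.
have := small (z / (`|c| + 1)); rewrite divr_gt0 // => /(_ isT).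
have zK : z / (`|c| + 1) * (`|c| + 1) = z by rewrite divfK ?gt_eqF.
have := ler_norm c; nra.
Qed.

Lemma sqr_le_discriminant (A B C : R) : 0 <= A ->
  (forall t, 0 <= t ^+ 2 * A - 2 * t * B + C) -> B ^+ 2 <= A * C.
Proof.
move=> A_ge0 quad_ge0; have := quad_ge0 0.
rewrite expr0n /= mul0r mulr0 mul0r subr0 add0r => C_ge0.
have [A_gt0|A_le0] := ltP 0 A.
  have := quad_ge0 (B / A); have AK : B / A * A = B by rewrite divfK ?gt_eqF.
  rewrite expr2 in AK *; nra.
have A0 : A = 0 by apply/le_anti; rewrite A_le0.
subst A.
have [->|B0] := eqVneq B 0; first by rewrite expr0n mul0r.
have BK : (C + 1) / (2 * B) * B = (C + 1) / 2 by field.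
have := quad_ge0 ((C + 1) / (2 * B)); nra.
Qed.

End RealFacts.

Section ComplexRe.
Variable R : realType.
Implicit Types (x y : R[i]) (t : R).

Lemma Re_add x y : complex.Re (x + y) = complex.Re x + complex.Re y.
Proof. by case: x => ? ?; case: y. Qed.

Lemma Re_sum (J : finType) (F : J -> R[i]) :
  complex.Re (\sum_j F j) = \sum_j complex.Re (F j).
Proof. by apply: big_morph => [x y|]; [exact: Re_add|]. Qed.

Lemma Re_opp x : complex.Re (- x) = - complex.Re x.
Proof. by case: x. Qed.

Lemma Re_realM t x : complex.Re ((t%:C)%C * x) = t * complex.Re x.
Proof. by case: x => ? ? /=; rewrite mul0r subr0. Qed.

Lemma Re_conjC x : complex.Re x^* = complex.Re x.
Proof. by case: x. Qed.

Lemma Re_ge0 x : 0 <= x -> 0 <= complex.Re x.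
Proof. by rewrite lecE => /andP[]. Qed.

End ComplexRe.

Section Densities.
Variables (R : realType) (I O : finType).
Implicit Types (p q : density R I O).

Definition sync_density q := forall v a b, a != b -> q v v a b = 0.

Definition diag_mismatch q v a := \sum_(b | b != a) (q v v a b + q v v b a).

Definition defect_bounded q := forall v w a b,
  (q v w a b - q w v b a) ^+ 2 <= 2 * (diag_mismatch q v a + diag_mismatch q w b).

Lemma sync_diag_mismatch q v a : sync_density q -> diag_mismatch q v a = 0.
Proof.
by move=> sync_q; apply: big1 => b ba; rewrite !sync_q ?addr0 // eq_sym.
Qed.

Lemma defect_bounded_sym q : defect_bounded q -> sync_density q ->
  forall v w a b, q v w a b = q w v b a.
Proof.
move=> bnd sync_q v w a b; apply/eqP; rewrite -subr_eq0 -sqrf_eq0 eq_le sqr_ge0 andbT.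
by have := bnd v w a b; rewrite !sync_diag_mismatch // addr0 mulr0.
Qed.

Lemma diag_mismatch_close p q (e : R) :
  (forall v w a b, `|p v w a b - q v w a b| <= e) ->
  forall v a, `|diag_mismatch p v a - diag_mismatch q v a| <= #|O|%:R * (2 * e).
Proof.
move=> close v a; rewrite /diag_mismatch -sumrB.
apply: le_trans (ler_norm_sum _ _ _) _; rewrite big_mkcond /= -sum1_card natr_sum mulr_suml.
apply: ler_sum => b _; rewrite mul1r; case: ifP => _; last first.
  by rewrite mulr_ge0 // (le_trans _ (close v v a a)).
rewrite opprD addrACA; apply: le_trans (ler_normD _ _) _.
by rewrite mulrDl mul1r lerD.
Qed.

Lemma defect_bounded_closed p :
  (forall e, 0 < e -> exists q, defect_bounded q /\ forall v w a b, `|p v w a b - q v w a b| < e) ->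
  defect_bounded p.
Proof.
move=> approx v w a b; rewrite -subr_le0.
set d := p v w a b - p w v b a.
apply: (@le0_of_le_scaled _ _ (4 * `|d| + 8 * #|O|%:R)) => e e0.
have [q [bnd_q close]] := approx e e0.
have {}close v' w' a' b' : `|p v' w' a' b' - q v' w' a' b'| <= e by exact/ltW.
set d' := q v w a b - q w v b a.
have dd' : `|d - d'| <= 2 * e.
  have -> : d - d' = (p v w a b - q v w a b) - (p w v b a - q w v b a).
    by rewrite /d /d'; ring.
  by apply: le_trans (ler_normB _ _) _; rewrite mulr2n mulrDl mul1r lerD.
have sq_d : d ^+ 2 <= d' ^+ 2 + e * (4 * `|d|).
  have : d * (d - d') <= `|d| * (2 * e).
    by apply: le_trans (ler_norm _) _; rewrite normrM ler_wpM2l.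
  have := sqr_ge0 (d - d'); rewrite !expr2; nra.
have := bnd_q v w a b; rewrite -/d'.
move: (diag_mismatch_close close v a) (diag_mismatch_close close w b).
rewrite !ler_norml => /andP[Mva _] /andP[Mwb _].
nra.
Qed.

End Densities.

Section PreHilbert.
Variables (R : realType) (V : lmodType R[i]) (ip : V -> V -> R[i]).
Hypothesis ip_linear : forall c x y z, ip (c *: x + y) z = c * ip x z + ip y z.
Hypothesis ip_conj : forall x y, ip y x = (ip x y)^*.
Hypothesis ip_ge0 : forall x, 0 <= ip x x.

Lemma ipDl x y z : ip (x + y) z = ip x z + ip y z.
Proof. by have := ip_linear 1 x y z; rewrite scale1r mul1r. Qed.

Lemma ip0l z : ip 0 z = 0.
Proof. by apply: (addrI (ip 0 z)); rewrite -ipDl !addr0. Qed.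

Lemma ipZl c x z : ip (c *: x) z = c * ip x z.
Proof. by rewrite -[c *: x]addr0 ip_linear ip0l addr0. Qed.

Lemma ipBl x y z : ip (x - y) z = ip x z - ip y z.
Proof. by rewrite ipDl -scaleN1r ipZl mulN1r. Qed.

Lemma ip_suml (J : finType) (F : J -> V) z : ip (\sum_j F j) z = \sum_j ip (F j) z.
Proof.
by apply: (big_morph (ip^~ z)) => [x y|]; [exact: ipDl | exact: ip0l].
Qed.

Lemma ip_sumr (J : finType) (F : J -> V) z : ip z (\sum_j F j) = \sum_j ip z (F j).
Proof. by rewrite ip_conj ip_suml rmorph_sum; apply: eq_bigr => j _; rewrite [RHS]ip_conj. Qed.

Local Notation re x y := (complex.Re (ip x y)).

Lemma re_sym x y : re x y = re y x.
Proof. by rewrite ip_conj Re_conjC. Qed.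

Lemma reBl x y z : re (x - y) z = re x z - re y z.
Proof. by rewrite ipBl Re_add Re_opp. Qed.

Lemma reBr x y z : re z (x - y) = re z x - re z y.
Proof. by rewrite re_sym reBl !(re_sym z). Qed.

Lemma re_realZl t x z : re ((t%:C)%C *: x) z = t * re x z.
Proof. by rewrite ipZl Re_realM. Qed.

Lemma re_realZr t x z : re z ((t%:C)%C *: x) = t * re z x.
Proof. by rewrite re_sym re_realZl re_sym. Qed.

Lemma re_ge0 x : 0 <= re x x.
Proof. exact/Re_ge0/ip_ge0. Qed.

Lemma re_CauchySchwarz x y : re x y ^+ 2 <= re x x * re y y.
Proof.
apply: sqr_le_discriminant (re_ge0 x) _ => t.
have := re_ge0 ((t%:C)%C *: x - y).
by rewrite !(reBl, reBr) !(re_realZl, re_realZr) (re_sym y); lra.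
Qed.

Section VectorModel.
Variables (I O : finType) (q : density R I O) (h k : I -> O -> V) (eta : V).
Hypothesis q_ip : forall v w a b, ((q v w a b)%:C)%C = ip (h v a) (k w b).
Hypothesis sum_h : forall v, \sum_a h v a = eta.
Hypothesis sum_k : forall w, \sum_b k w b = eta.
Hypothesis ip_h_eta : forall v a, ip (h v a) eta = ip (h v a) (h v a).
Hypothesis ip_eta_k : forall w b, ip eta (k w b) = ip (k w b) (k w b).
Hypothesis ip_eta : ip eta eta = 1.

Lemma re_q v w a b : re (h v a) (k w b) = q v w a b.
Proof. by rewrite -q_ip. Qed.

Lemma re_kk_le1 w b : re (k w b) (k w b) <= 1.
Proof.
have <- : \sum_b' re (k w b') (k w b') = 1.
  rewrite -[1]/(complex.Re 1) -ip_eta -{2}(sum_k w) ip_sumr.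
  by rewrite Re_sum; apply: eq_bigr => b' _; rewrite ip_eta_k.
by rewrite (bigD1 b) //= lerDl sumr_ge0 // => b' _; apply: re_ge0.
Qed.

Lemma re_h_sub_k v a : re (h v a - k v a) (h v a - k v a) = diag_mismatch q v a.
Proof.
have re_sum x (F : O -> V) : re x (\sum_b F b) = \sum_b re x (F b).
  by rewrite ip_sumr Re_sum.
have hh : re (h v a) (h v a) = \sum_b q v v a b.
  by rewrite -ip_h_eta -(sum_k v) re_sum; apply: eq_bigr => b _; rewrite re_q.
have kk : re (k v a) (k v a) = \sum_b q v v b a.
  rewrite -ip_eta_k re_sym -(sum_h v) re_sum.
  by apply: eq_bigr => b _; rewrite re_sym re_q.
rewrite !(reBl, reBr) hh kk (re_sym (k v a)) re_q /diag_mismatch big_split /=.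
by rewrite (bigD1 a) //= [\sum_b q v v b a](bigD1 a) //=; lra.
Qed.

Lemma re_mismatch_sqr_le v a w b :
  re (h v a - k v a) (k w b) ^+ 2 <= diag_mismatch q v a.
Proof.
apply: le_trans (re_CauchySchwarz _ _) _; rewrite re_h_sub_k ler_piMr ?re_kk_le1 //.
by rewrite -re_h_sub_k re_ge0.
Qed.

Lemma vector_model_defect_bounded : defect_bounded q.
Proof.
move=> v w a b.
have := re_mismatch_sqr_le v a w b; have := re_mismatch_sqr_le w b v a.
set x1 := re _ (k w b); set x2 := re _ (k v a).
have -> : q v w a b - q w v b a = x1 - x2.
  by rewrite /x1 /x2 !reBl !re_q (re_sym (k v a)); lra.
have := sqr_ge0 (x1 + x2); rewrite !expr2; nra.
Qed.

End VectorModel.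

End PreHilbert.

Section HilbertModels.
Variables (R : realType) (I O : finType).

Lemma vect_defect_bounded (p : density R I O) : vect_density p -> defect_bounded p.
Proof.
move=> [H [h [k [eta [orth_h [orth_k [eta1 [sum_h [sum_k [_ p_ip]]]]]]]]]].
have hip_sumr := ip_sumr (@hip_linear R H) (@hip_conj R H).
have hip_suml := ip_suml (@hip_linear R H).
apply: (vector_model_defect_bounded (@hip_linear R H) (@hip_conj R H) (@hip_ge0 R H)
  p_ip sum_h sum_k _ _ eta1) => [v a | w b].
- rewrite -(sum_h v) hip_sumr (bigD1 a) //= big1 ?addr0 // => a' a'a.
  by rewrite orth_h // eq_sym.
- by rewrite -(sum_k w) hip_suml (bigD1 b) //= big1 ?addr0 // => b'; apply: orth_k.
Qed.

Lemma qc_defect_bounded (p : density R I O) : qc_density p -> defect_bounded p.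
Proof.
move=> [H [E [F [psi [PVM_E [PVM_F [EF_comm [psi1 p_ip]]]]]]]].
have E_sa v a x y : hip (E v a x) y = hip x (E v a y) by case: (PVM_E v) => /(_ a) [_ [_ ->]].
have F_sa w b x y : hip (F w b x) y = hip x (F w b y) by case: (PVM_F w) => /(_ b) [_ [_ ->]].
have E_idem v a x : E v a (E v a x) = E v a x by case: (PVM_E v) => /(_ a) [_ [-> _]].
have F_idem w b x : F w b (F w b x) = F w b x by case: (PVM_F w) => /(_ b) [_ [-> _]].
apply: (vector_model_defect_bounded (@hip_linear R H) (@hip_conj R H) (@hip_ge0 R H)
  (h := fun v a => E v a psi) (k := fun w b => F w b psi) (eta := psi)) => //.
- by move=> v w a b; rewrite p_ip EF_comm F_sa.
- by move=> v; case: (PVM_E v).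
- by move=> w; case: (PVM_F w).
- by move=> v a; rewrite -{1}E_idem E_sa.
- by move=> w b; rewrite -{1}F_idem F_sa.
Qed.

End HilbertModels.

Section Matrices.
Variable R : realType.
Local Notation C := R[i].

Lemma adjmxE m n (A : 'M[C]_(m, n)) i j : adjmx A i j = (A j i)^*.
Proof. by rewrite !mxE. Qed.

Lemma adjmxM m n l (A : 'M[C]_(m, n)) (B : 'M[C]_(n, l)) :
  adjmx (A *m B) = adjmx B *m adjmx A.
Proof. by rewrite /adjmx trmx_mul map_mxM. Qed.

Lemma adjmxK m n (A : 'M[C]_(m, n)) : adjmx (adjmx A) = A.
Proof. by apply/matrixP => i j; rewrite !adjmxE conjCK. Qed.

Lemma adjmx_tens m n m' n' (A : 'M[C]_(m, n)) (B : 'M[C]_(m', n')) :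
  adjmx (A *t B) = adjmx A *t adjmx B.
Proof. by rewrite /adjmx trmx_tens map_mxT. Qed.

Lemma adjmx1 n : adjmx (1%:M : 'M[C]_n) = 1%:M.
Proof. by rewrite /adjmx trmx1 map_mx1. Qed.

Lemma tensmx11 n m : (1%:M : 'M[C]_n) *t (1%:M : 'M[C]_m) = 1%:M.
Proof.
apply/matrixP => i j.
case: (mxtens_indexP i) => i1 i2; case: (mxtens_indexP j) => j1 j2.
rewrite tensmxE !mxE (inj_eq (can_inj (@mxtens_indexK _ _))) xpair_eqE.
by case: (i1 == j1); case: (i2 == j2); rewrite ?mulr1 ?mulr0 ?mul0r.
Qed.

Lemma tensmx_suml (J : finType) m n m' n' (A : J -> 'M[C]_(m, n)) (B : 'M[C]_(m', n')) :
  \sum_j (A j *t B) = (\sum_j A j) *t B.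
Proof.
apply/matrixP => i l.
case: (mxtens_indexP i) => i1 i2; case: (mxtens_indexP l) => l1 l2.
by rewrite summxE tensmxE summxE mulr_suml; apply: eq_bigr => j _; rewrite tensmxE.
Qed.

Lemma tensmx_sumr (J : finType) m n m' n' (A : 'M[C]_(m, n)) (B : J -> 'M[C]_(m', n')) :
  \sum_j (A *t B j) = A *t (\sum_j B j).
Proof.
apply/matrixP => i l.
case: (mxtens_indexP i) => i1 i2; case: (mxtens_indexP l) => l1 l2.
by rewrite summxE tensmxE summxE mulr_sumr; apply: eq_bigr => j _; rewrite tensmxE.
Qed.

Definition mxip N (x y : 'cV[C]_N) : C := (adjmx y *m x) 0 0.

Lemma mxip_linear N c (x y z : 'cV[C]_N) : mxip (c *: x + y) z = c * mxip x z + mxip y z.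
Proof. by rewrite /mxip mulmxDr -scalemxAr !mxE. Qed.

Lemma mxip_conj N (x y : 'cV[C]_N) : mxip y x = (mxip x y)^*.
Proof. by rewrite /mxip -adjmxE adjmxM adjmxK. Qed.

Lemma mxip_ge0 N (x : 'cV[C]_N) : 0 <= mxip x x.
Proof.
by rewrite /mxip mxE sumr_ge0 // => i _; rewrite adjmxE mulrC mul_conjC_ge0.
Qed.

End Matrices.

Lemma q_defect_bounded (R : realType) (I O : finType) (p : density R I O) :
  q_density p -> defect_bounded p.
Proof.
move=> [n [m [E [F [psi [PVM_E [PVM_F [psi1 p_ip]]]]]]]].
have E_sa v a : adjmx (E v a) = E v a by case: (PVM_E v) => /(_ a) [].
have F_sa w b : adjmx (F w b) = F w b by case: (PVM_F w) => /(_ b) [].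
have E_idem v a : E v a *m E v a = E v a by case: (PVM_E v) => /(_ a) [].
have F_idem w b : F w b *m F w b = F w b by case: (PVM_F w) => /(_ b) [].
apply: (vector_model_defect_bounded (@mxip_linear R _) (@mxip_conj R _) (@mxip_ge0 R _)
  (h := fun v a => (E v a *t 1%:M) *m psi) (k := fun w b => (1%:M *t F w b) *m psi)
  (eta := psi)) => //.
- move=> v w a b; rewrite p_ip /mxip adjmxM adjmx_tens adjmx1 F_sa.
  by rewrite -mulmxA (mulmxA (1%:M *t _)) tensmx_mul mul1mx mulmx1.
- move=> v; rewrite -mulmx_suml tensmx_suml.
  by case: (PVM_E v) => _ ->; rewrite tensmx11 mul1mx.
- move=> w; rewrite -mulmx_suml tensmx_sumr.
  by case: (PVM_F w) => _ ->; rewrite tensmx11 mul1mx.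
- move=> v a; rewrite /mxip adjmxM adjmx_tens adjmx1 E_sa.
  by rewrite -mulmxA (mulmxA (E v a *t _)) tensmx_mul E_idem mulmx1.
- move=> w b; rewrite /mxip adjmxM adjmx_tens adjmx1 F_sa.
  by rewrite [in RHS]mulmxA -[in RHS](mulmxA (adjmx psi)) tensmx_mul F_idem mulmx1.
Qed.

Section LocalModels.
Local Open Scope classical_set_scope.

Lemma negligible_big_setU (R : realType) (d : measure_display) (T : ringOfSetsType d)
    (mu : {content set T -> \bar R}) (J : finType) (K : pred J) (F : J -> set T) :
  (forall j, K j -> mu.-negligible (F j)) -> mu.-negligible (\big[setU/set0]_(j | K j) F j).
Proof. by move=> negF; apply: big_ind => //; [exact: negligible_set0 | exact: negligibleU]. Qed.

Lemma mismatch_negligible (R : realType) (d : measure_display) (T : measurableType d)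
    (P : probability T R) (O : finType) (f g : T -> O) :
  (forall c, measurable [set om | f om = c]) -> (forall c, measurable [set om | g om = c]) ->
  (forall c c', c != c' -> P [set om | f om = c /\ g om = c'] = 0%E) ->
  P.-negligible [set om | f om != g om].
Proof.
move=> mf mg null; apply: (negligibleS _ (negligible_big_setU
  (K := fun x : O * O => x.1 != x.2) (F := fun x => [set om | f om = x.1 /\ g om = x.2]) _)).
- by move=> om /= fg; rewrite (bigD1 (f om, g om)); [left | exact: fg].
- by move=> x x12; apply/negligibleP; [exact: (measurableI _ _ (mf _) (mg _)) | exact: null].
Qed.

Variables (R : realType) (I O : finType).

Lemma loc_density_le (p : density R I O) : loc_density p -> sync_density p ->
  forall v w a b, p v w a b <= p w v b a.
Proof.
move=> [d [T [P [f [g [mf [mg p_P]]]]]]] sync_p v w a b.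
have mfg u u' c c' : measurable [set om | f u om = c /\ g u' om = c'].
  exact: (measurableI _ _ (mf u c) (mg u' c')).
have null u : P.-negligible [set om | f u om != g u om].
  by apply: mismatch_negligible => // c c' cc'; rewrite -p_P sync_p.
have [N [mN PN0 subN]] := negligibleU (null v) (null w).
rewrite -lee_fin !p_P -(measureU0 (mfg w v b a) mN PN0).
apply: le_measure; rewrite ?inE; [exact: mfg | exact: measurableU | ].
move=> om [fa gb]; have [fg_v|fg_v] := eqVneq (f v om) (g v om); last by right; apply: subN; left.
have [fg_w|fg_w] := eqVneq (f w om) (g w om); last by right; apply: subN; right.
by left; split; [rewrite fg_w | rewrite -fg_v].
Qed.

Lemma loc_density_sym (p : density R I O) : loc_density p -> sync_density p ->
  forall v w a b, p v w a b = p w v b a.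
Proof. by move=> loc_p sync_p v w a b; apply/le_anti; rewrite !loc_density_le. Qed.

End LocalModels.

Section Symmetry.
Variables (R : realType) (I O : finType).
Implicit Types (p : density R I O) (lam : rule I O).

Lemma qa_defect_bounded p : qa_density p -> defect_bounded p.
Proof.
move=> qa_p; apply: defect_bounded_closed => e e0.
by have [q [/q_defect_bounded ? ?]] := qa_p e e0; exists q.
Qed.

Lemma sync_density_sym t p : in_class t p -> sync_density p ->
  forall v w a b, p v w a b = p w v b a.
Proof.
case: t => /= class_p; first exact: loc_density_sym.
- exact: defect_bounded_sym (q_defect_bounded class_p).
- exact: defect_bounded_sym (qa_defect_bounded class_p).
- exact: defect_bounded_sym (qc_defect_bounded class_p).
- exact: defect_bounded_sym (vect_defect_bounded class_p).
Qed.

Lemma perfect_sync_density lam p :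
  synchronous lam -> perfect_for lam p -> sync_density p.
Proof. by move=> sync_lam perf_p v a b ab; apply: perf_p; rewrite sync_lam (negbTE ab). Qed.

Lemma perfect_for_sym_rule lam p : (forall v w a b, p v w a b = p w v b a) ->
  perfect_for lam p -> perfect_for (sym_rule lam) p.
Proof.
move=> p_sym perf_p v w a b /nandP[] /negbTE; first exact: perf_p.
by rewrite p_sym; apply: perf_p.
Qed.

End Symmetry.

Theorem mainTheorem10 (R : realType) (I O : finType) (lam : rule I O)
  (Hsync : synchronous lam) (t : corr_class) (p : density R I O) :
  perfect_strategy t lam p <-> perfect_strategy t (sym_rule lam) p.
Proof.
split=> -[cond_p [class_p perf_p]]; do 2!split => //.
- apply: perfect_for_sym_rule (perf_p).
  exact: sync_density_sym class_p (perfect_sync_density Hsync perf_p).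
- by move=> v w a b lam0; apply: perf_p; rewrite /sym_rule lam0.
Qed.
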